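(* Let $G=\mathrm{Aut}(\mathbf{K})$ for a Fraïssé structure $\mathbf{K}$ with exhaustion $\bigcup_n\mathbf{A}_n$, and let $M\subseteq S(G)$ be a minimal subflow. Suppose $\alpha,\gamma\in S(G)$ are such that $\phi(\alpha)=\phi(\gamma)$ for every retraction $\phi:S(G)\to M$, and let $S\subseteq H_m$ be minimal. Then $S\in\alpha(m)$ if and only if $S\in\gamma(m)$.
   Context: $\mathbf{K}$ is a countably infinite ultrahomogeneous relational structure; $\mathbf{A}_1\subseteq\mathbf{A}_2\subseteq\cdots$ finite substructures, $|\mathbf{A}_n|=n$, union $\mathbf{K}$; $H_n=\mathrm{Emb}(\mathbf{A}_n,\mathbf{K})$. $S(G)$ is the inverse limit of the spaces $\beta H_n$ of ultrafilters along the continuous extensions of restriction maps $H_n\to H_m$; $\alpha(n)$ is the $n$-th coordinate. Right $G$-action: for $S\subseteq H_m$, $S\in(\alpha g)(m)$ iff $\{x\in H_n:x\circ g|_{\mathbf{A}_m}\in S\}\in\alpha(n)$ for $n$ with $g(\mathbf{A}_m)\subseteq\mathbf{A}_n$; for $f\in H_m$ set $\alpha\cdot f=(\alpha g)(m)$ for any $g\in G$ extending $f$. Semigroup product: $S\in(\alpha\gamma)(m)$ iff $\{f\in H_m:S\in\alpha\cdot f\}\in\gamma(m)$. A minimal subflow is a nonempty closed $G$-invariant set with no proper such subset; a retraction onto $M$ is a continuous $G$-equivariant $\phi:S(G)\to M$ with $\phi|_M=\mathrm{id}$. Identify subsets of $H_m$ with $2^{H_m}$, with right action $(\chi\cdot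 g)(f)=\chi(g\circ f)$; $S\subseteq H_m$ is minimal if $\overline{\chi_S\cdot G}$ is a minimal $G$-flow. *)

From mathcomp Require Import all_boot.
From Stdlib Require List.

Set Implicit Arguments.
Unset Strict Implicit.
Unset Printing Implicit Defensive.

Definition pset (T : Type) := T -> Prop.

Record Struct := {
  Lang : Type;
  ar : Lang -> nat;
  Rel : forall r : Lang, ('I_(ar r) -> nat) -> Prop
}.

Section Defs.
Variable K : Struct.

Definition is_aut (g : nat -> nat) : Prop :=
  bijective g /\
  forall (r : Lang K) (t : 'I_(ar r) -> nat), Rel t <-> Rel (fun i => g (t i)).

Definition ultrahomogeneous : Prop :=
  forall (k : nat) (a b : 'I_k -> nat),
    injective a -> injective b ->
    (forall (r : Lang K) (t : 'I_(ar r) -> 'I_k),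
        Rel (fun i => a (t i)) <-> Rel (fun i => b (t i))) ->
    exists g, is_aut g /\ forall i, g (a i) = b i.

(** The exhaustion: A_n is the substructure on {0,...,n-1}.
    Embeddings A_n -> K. *)
Definition is_emb (n : nat) (f : 'I_n -> nat) : Prop :=
  injective f /\
  forall (r : Lang K) (t : 'I_(ar r) -> 'I_n),
    Rel (fun i => nat_of_ord (t i)) <-> Rel (fun i => f (t i)).

Definition H (n : nat) := {f : 'I_n -> nat | is_emb f}.

(** [agree y x k]: y = x o k (on A_m), where k maps A_m into A_n *)
Definition agree (m n : nat) (y : H m) (x : H n) (k : 'I_m -> nat) : Prop :=
  forall (i : 'I_m) (j : 'I_n), nat_of_ord j = k i -> proj1_sig y i = proj1_sig x j.

Definition ultrafilter (T : Type) (U : pset (pset T)) : Prop :=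
  U (fun _ => True) /\ ~ U (fun _ => False) /\
  (forall A B : pset T, U A -> (forall x, A x -> B x) -> U B) /\
  (forall A B : pset T, U A -> U B -> U (fun x => A x /\ B x)) /\
  (forall A : pset T, U A \/ U (fun x => ~ A x)).

(** points of S(G) are families of ultrafilters alpha(n) on H_n *)
Definition Pt := forall n : nat, pset (pset (H n)).

(** preimage of S subset H_m under restriction H_n -> H_m *)
Definition restr_pre (m n : nat) (S : pset (H m)) : pset (H n) :=
  fun x => exists y, S y /\ agree y x (fun i => nat_of_ord i).

(** S(G) : the inverse limit of the beta H_n *)
Definition in_SG (a : Pt) : Prop :=
  (forall n, ultrafilter (a n)) /\
  (forall m n, m <= n -> forall S : pset (H m), a m S <-> a n (@restr_pre m n S)).

(** right action of G on S(G) *)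
Definition act (a : Pt) (g : nat -> nat) : Pt :=
  fun m S => exists n, (forall i : 'I_m, g i < n) /\
    a n (fun x : H n => exists y, S y /\ agree y x (fun i => g i)).

(** topology of S(G): basic clopen sets {b | T in b(m)} *)
Definition continuous_SG (phi : Pt -> Pt) : Prop :=
  forall a, in_SG a -> forall m (S : pset (H m)), phi a m S ->
    exists m' (T : pset (H m')), a m' T /\
      forall b, in_SG b -> b m' T -> phi b m S.

Definition closed_SG (C : pset Pt) : Prop :=
  forall a, in_SG a -> ~ C a ->
    exists m (T : pset (H m)), a m T /\ forall b, in_SG b -> b m T -> ~ C b.

Definition invariant_SG (C : pset Pt) : Prop :=
  forall a g, C a -> is_aut g -> C (act a g).

Definition minimal_subflow (M : pset Pt) : Prop :=
  (forall a, M a -> in_SG a) /\ (exists a, M a) /\ closed_SG M /\ invariant_SG M /\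
  (forall N : pset Pt, (forall a, N a -> M a) -> (exists a, N a) ->
      closed_SG N -> invariant_SG N -> forall a, M a -> N a).

Definition retraction (M : pset Pt) (phi : Pt -> Pt) : Prop :=
  (forall a, in_SG a -> M (phi a)) /\
  continuous_SG phi /\
  (forall a g, in_SG a -> is_aut g -> phi (act a g) = act (phi a) g) /\
  (forall a, M a -> phi a = a).

(** the flow 2^{H_m}: points are subsets of H_m, (T.g)(f) = T(g o f) *)
Definition actS (m : nat) (T : pset (H m)) (g : nat -> nat) : pset (H m) :=
  fun f => exists h, T h /\ forall i, proj1_sig h i = g (proj1_sig f i).

(** closure in the product topology of 2^{H_m} *)
Definition in_closure (m : nat) (A : pset (pset (H m))) (T : pset (H m)) : Prop :=
  forall F : list (H m), exists U, A U /\ forall f, List.In f F -> (T f <-> U f).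

Definition closed2 (m : nat) (A : pset (pset (H m))) : Prop :=
  forall T, in_closure A T -> A T.

Definition invariant2 (m : nat) (A : pset (pset (H m))) : Prop :=
  forall T g, A T -> is_aut g -> A (actS T g).

Definition minimal_flow2 (m : nat) (X : pset (pset (H m))) : Prop :=
  (exists T, X T) /\ closed2 X /\ invariant2 X /\
  (forall Y : pset (pset (H m)), (forall T, Y T -> X T) -> (exists T, Y T) ->
      closed2 Y -> invariant2 Y -> forall T, X T -> Y T).

Definition orbit_closure (m : nat) (S : pset (H m)) : pset (pset (H m)) :=
  in_closure (fun U => exists g, is_aut g /\ U = actS S g).

Definition minimal_set (m : nat) (S : pset (H m)) : Prop :=
  minimal_flow2 (orbit_closure S).

End Defs.

(* The retraction is left multiplication by an idempotent.  The map
   b |-> trace b S = {f | S in b.f} is equivariant and continuous, and it sends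
   the minimal subflow M into the orbit closure of S; its image is closed and
   invariant, so minimality of S puts S itself in the image.  Hence
   {q in M | trace q S = S} is a nonempty closed subsemigroup of the compact
   semigroup S(G), and by Ellis-Numakura it contains an idempotent u.  Left
   multiplication by u is a retraction of S(G) onto M, and (u b)(m) contains S
   iff b(m) contains trace u S = S, so applying the hypothesis to this
   retraction gives the claim.  Ultrahomogeneity enters by realising every
   embedding A_m -> K as the restriction of an automorphism: this makes S(G)
   compact (ultrafilters on G are pushed forward) and M a right ideal. *)

From mathcomp Require Import all_boot.
From mathcomp Require Import boolp classical_sets filter.

Set Implicit Arguments.
Unset Strict Implicit.
Unset Printing Implicit Defensive.

Local Open Scope classical_set_scope.

Section Ultrafilter.
Variables (T : Type) (U : set (set T)).
Hypothesis hU : ultrafilter U.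

Lemma ultraT : U setT. Proof. by case: hU. Qed.

Lemma ultra_neq0 : ~ U set0. Proof. by case: hU => _ []. Qed.

Lemma ultraS A B : U A -> A `<=` B -> U B.
Proof. by case: hU => _ [_ [+ _]]; apply. Qed.

Lemma ultraI A B : U A -> U B -> U (A `&` B).
Proof. by case: hU => _ [_ [_ [+ _]]]; apply. Qed.

Lemma ultra_setVsetC A : U A \/ U (~` A).
Proof. by case: hU => _ [_ [_ [_]]]; apply. Qed.

Lemma ultra_iff A B : (forall x, A x <-> B x) -> (U A <-> U B).
Proof. by move=> AB; split=> UA; apply: (ultraS UA) => x /AB. Qed.

Lemma ultra_nonempty A : U A -> A !=set0.
Proof. by move=> UA; apply/set0P/eqP => A0; apply: ultra_neq0; rewrite -A0. Qed.

Lemma ultraC A : U (~` A) <-> ~ U A.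
Proof.
split=> [UAc UA|nUA]; last by case: (ultra_setVsetC A).
by apply: ultra_neq0; apply: ultraS (ultraI UA UAc) _ => x [].
Qed.

Lemma ultra_list_forall I (s : list I) (A : I -> set T) :
  (forall i, List.In i s -> U (A i)) -> U [set x | forall i, List.In i s -> A i x].
Proof.
elim: s => [|i s IHs] UAs; first by apply: ultraS ultraT _ => x _ i [].
have UAi := UAs i (or_introl erefl).
have UAs' := IHs (fun j sj => UAs j (or_intror sj)).
by apply: ultraS (ultraI UAi UAs') _ => x [Aix Asx] j [<-|/Asx].
Qed.

End Ultrafilter.

Lemma ultrafilter_eq T (U V : set (set T)) :
  ultrafilter U -> (forall A, U A <-> V A) -> ultrafilter V.
Proof. by move=> hU UV; have -> : V = U by apply/funext => A; apply/propext; split => /UV. Qed.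

Lemma ultrafilter_preimage T1 T2 (U : set (set T1)) (phi : T1 -> T2) :
  ultrafilter U -> ultrafilter [set A | U (phi @^-1` A)].
Proof.
move=> hU; split; first exact: ultraT hU.
split; first exact: ultra_neq0 hU.
split; first by move=> A B /= UA AB; apply: (ultraS hU UA) => x /AB.
split; first by move=> A B /= UA UB; exact: (ultraI hU UA UB).
by move=> A; exact: (ultra_setVsetC hU (phi @^-1` A)).
Qed.

Lemma ultrafilter_bind X Y (U : set (set X)) (V : X -> set (set Y)) :
  ultrafilter U -> (forall x, ultrafilter (V x)) -> ultrafilter [set B | U [set x | V x B]].
Proof.
move=> hU hV; split.
  by apply: (ultraS hU (ultraT hU)) => x _; exact: (ultraT (hV x)).
split; first by move/(ultra_nonempty hU) => [x]; exact: (ultra_neq0 (hV x)).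
split.
  by move=> A B /= UA AB; apply: (ultraS hU UA) => x VA; exact: (ultraS (hV x) VA AB).
split.
  move=> A B /= UA UB; apply: (ultraS hU (ultraI hU UA UB)) => x [VA VB].
  exact: (ultraI (hV x) VA VB).
move=> A /=; case: (ultra_setVsetC hU [set x | V x A]) => UA; [left => // | right].
by apply: (ultraS hU UA) => x /(ultraC (hV x)).
Qed.

Lemma ultrafilter_of_base T (B : set (set T)) :
  B !=set0 -> (forall A, B A -> A !=set0) ->
  (forall A1 A2, B A1 -> B A2 -> exists2 A3, B A3 & A3 `<=` A1 `&` A2) ->
  exists2 U, ultrafilter U & B `<=` U.
Proof.
move=> [A0 BA0] Bne BI.
have FB : Filter (filter_from B id).
  apply: filter_from_filter; first by exists A0.
  by move=> i j Bi Bj; have [k Bk ij] := BI _ _ Bi Bj; exists k.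
have PB : ProperFilter (filter_from B id) by apply: filter_from_proper => i /Bne.
have [U [UU BU]] := ultraFilterLemma PB.
have PU : ProperFilter U by exact: ultra_proper.
exists U; last by move=> A BA; apply: BU; exists A.
split; first exact: filterT.
split; first exact: (filter_not_empty U).
split; first by move=> A A' UA AA'; apply: filterS UA.
split; first by move=> A A'; exact: filterI.
by move=> A; exact: in_ultra_setVsetC.
Qed.

Lemma minimal_by_chains T (P : set (set T)) Z0 :
  P Z0 ->
  (forall F, F `<=` P -> F !=set0 -> total_on F subset -> P (\bigcap_(Z in F) Z)) ->
  exists2 Z, P Z & forall Z', P Z' -> Z' `<=` Z -> Z `<=` Z'.
Proof.
move=> PZ0 Pchain.
pose R (Z Z' : {Z | P Z}) := `[< sval Z' `<=` sval Z >].
have [| | |[Z PZ] Zmin] := @ZL_preorder _ (exist _ Z0 PZ0) R.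
- by move=> ?; exact/asboolP.
- by move=> ? ? ? /asboolP h1 /asboolP h2; apply/asboolP; exact: subset_trans h1.
- move=> A Atot; have [[[Z1 PZ1] AZ1]|A0] := pselect (A !=set0); last first.
    by exists (exist _ Z0 PZ0) => Z AZ; case: A0; exists Z.
  have PA : P (\bigcap_(Z in sval @` A) Z).
    apply: Pchain; first by move=> _ [[Z PZ] _ <-].
      by exists Z1, (exist _ Z1 PZ1).
    move=> _ _ [Z AZ <-] [Z' AZ' <-].
    by case: (Atot _ _ AZ AZ') => /asboolP; [right|left].
  by exists (exist _ _ PA) => Z AZ; apply/asboolP => x; apply; exists Z.
by exists Z => // Z' PZ' Z'Z; have /asboolP := Zmin (exist _ Z' PZ') (asboolT Z'Z).
Qed.

Section EllisNumakura.
Variables (X : Type) (space : set X) (closed : set X -> Prop) (mul : X -> X -> X).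
Hypothesis closed_bigcap :
  forall F : set (set X), (forall Z, F Z -> closed Z) -> closed (\bigcap_(Z in F) Z).
Hypothesis chain_compact : forall F : set (set X),
  F !=set0 -> total_on F subset ->
  (forall Z, F Z -> [/\ closed Z, Z !=set0 & Z `<=` space]) -> \bigcap_(Z in F) Z !=set0.
Hypothesis mulA : forall x y z, space x -> space y -> space z ->
  mul (mul x y) z = mul x (mul y z).
Hypothesis closed_image_mull :
  forall u Y, space u -> Y `<=` space -> closed Y -> closed (mul u @` Y).
Hypothesis closed_fix_mull : forall u, space u -> closed [set z | mul u z = u].

Definition mul_closed (Z : set X) := forall x y, Z x -> Z y -> Z (mul x y).

Lemma closedI A B : closed A -> closed B -> closed (A `&` B).
Proof.
move=> clA clB; have -> : A `&` B = \bigcap_(Z in [set A; B]) Z.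
  by apply/seteqP; split => [x [Ax Bx] _ [->|->] | x AB] //; split; apply: AB; [left|right].
by apply: closed_bigcap => _ [->|->].
Qed.

Theorem ellis_numakura T0 : T0 `<=` space -> closed T0 -> T0 !=set0 -> mul_closed T0 ->
  exists2 u, T0 u & mul u u = u.
Proof.
move=> T0sp clT0 T0ne mulT0.
pose P Z := [/\ Z `<=` T0, Z !=set0, closed Z & mul_closed Z].
have [Z [ZT0 [u Zu] clZ mulZ] Zmin] : exists2 Z, P Z & forall Z', P Z' -> Z' `<=` Z -> Z `<=` Z'.
  apply: (minimal_by_chains (Z0 := T0)) => [|F FP [Z1 FZ1] Ftot]; first by split.
  have [Z1T0 _ _ _] := FP _ FZ1.
  split.
  - by move=> x /(_ Z1 FZ1) /Z1T0.
  - apply: chain_compact Ftot _; first by exists Z1.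
    by move=> Z /FP [ZT0 Zne clZ _]; split => // x /ZT0 /T0sp.
  - by apply: closed_bigcap => Z /FP [].
  - by move=> x y Fx Fy Z FZ; have [_ _ _] := FP _ FZ; apply; [exact: Fx | exact: Fy].
have Zsp : Z `<=` space by move=> x /ZT0 /T0sp.
have [z Zz uz] : exists2 z, Z z & mul u z = u.
  have uZZ : mul u @` Z `<=` Z by move=> _ [z Zz <-]; exact: mulZ.
  suff PuZ : P (mul u @` Z) by exact: Zmin _ PuZ uZZ u Zu.
  split.
  - exact: subset_trans uZZ ZT0.
  - by exists (mul u u), u.
  - exact: closed_image_mull (Zsp _ Zu) Zsp clZ.
  move=> _ _ [z Zz <-] [z' Zz' <-]; exists (mul z (mul u z')).
    by apply: (mulZ) => //; exact: mulZ.
  have uz'_sp : space (mul u z') by apply: Zsp; exact: mulZ.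
  by rewrite mulA //; apply: Zsp.
suff PZu : P (Z `&` [set z | mul u z = u]).
  by have [_ uu] := Zmin _ PZu (@subIsetl _ _ _) u Zu; exists u => //; exact: ZT0.
split.
- by move=> x [/ZT0].
- by exists z.
- exact: closedI (closed_fix_mull (Zsp _ Zu)).
move=> x y [Zx ux] [Zy uy]; split; first exact: mulZ.
by rewrite /= -mulA ?ux //; apply: Zsp.
Qed.

End EllisNumakura.

Section Embeddings.
Variable K : Struct.

Lemma emb_ext n (x y : H K n) : (forall i, sval x i = sval y i) -> x = y.
Proof.
case: x y => x xemb [y yemb] /= xy; have exy : x = y by apply/funext.
by subst; congr exist; exact: Prop_irrelevance.
Qed.

Lemma is_emb_incl n : is_emb K (fun i : 'I_n => nat_of_ord i).
Proof. by split; first exact: val_inj. Qed.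

Definition incl n : H K n := exist _ _ (is_emb_incl n).

Lemma incl_lt m n : m <= n -> forall i, sval (incl m) i < n.
Proof. by move=> mn i; exact: leq_trans (ltn_ord i) mn. Qed.

Lemma is_emb_comp m n (x : H K n) (f : H K m) (fn : forall i, sval f i < n) :
  is_emb K (fun i => sval x (Ordinal (fn i))).
Proof.
case: x fn => x [xinj xrel]; case: f => f [finj frel] /= fn; split.
  by move=> i j /xinj [] /finj.
by move=> r t; rewrite (frel r t); exact: (xrel r (fun k => Ordinal (fn (t k)))).
Qed.

Definition emb_comp m n (x : H K n) (f : H K m) fn : H K m :=
  exist _ _ (@is_emb_comp m n x f fn).
Arguments emb_comp {m n} x f fn.

Lemma emb_compA m n p (x : H K p) (y : H K n) (f : H K m) yp fn yfp :
  emb_comp (emb_comp x y yp) f fn = emb_comp x (emb_comp y f fn) yfp.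
Proof. by apply: emb_ext => i /=; congr (sval x _); exact: val_inj. Qed.

Lemma is_emb_aut g : is_aut K g -> forall m, is_emb K (fun i : 'I_m => g i).
Proof.
case=> [[g' gK _] grel] m; split; first by move=> i j /(congr1 g'); rewrite !gK; exact: val_inj.
by move=> r t; exact: (grel r (fun k => nat_of_ord (t k))).
Qed.

Definition aut_emb g (hg : is_aut K g) m : H K m := exist _ _ (is_emb_aut hg m).

Lemma aut_emb_incl g (hg : is_aut K g) m n (mn : m <= n) :
  emb_comp (aut_emb hg n) (incl m) (incl_lt mn) = aut_emb hg m.
Proof. exact: emb_ext. Qed.

Lemma ubound m (k : 'I_m -> nat) : exists n, forall i, k i < n.
Proof. by exists (\max_(i < m) k i).+1 => i; rewrite ltnS; exact: leq_bigmax_cond. Qed.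

Lemma ubound_list m (s : list (H K m)) :
  exists n, forall f, List.In f s -> forall i, sval f i < n.
Proof.
elim: s => [|f s [n sn]]; first by exists 0.
have [n' fn'] := ubound (sval f).
exists (maxn n n') => f' [<-|/sn f'n] i.
  by apply: leq_trans (fn' i) _; exact: leq_maxr.
by apply: leq_trans (f'n i) _; exact: leq_maxl.
Qed.

Lemma ultrahomogeneous_extend : ultrahomogeneous K ->
  forall m (f : H K m), exists g (hg : is_aut K g), aut_emb hg m = f.
Proof.
move=> hK m [f [finj frel]].
have [g [hg gf]] := hK m (fun i => nat_of_ord i) f val_inj finj (fun r t => frel r t).
by exists g, hg; apply: emb_ext.
Qed.

Lemma is_aut_id : is_aut K id.
Proof. by split; first exists id. Qed.

Lemma orbit_closure_self m (S : pset (H K m)) : orbit_closure S S.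
Proof.
move=> F; exists (actS S id); split; first by exists id; split; first exact: is_aut_id.
by move=> f _; split=> [Sf | [h [Sh hf]]]; [exists f | rewrite -(emb_ext hf)].
Qed.

End Embeddings.

Arguments incl {K n}.
Arguments emb_comp {K m n} x f fn.
Arguments incl_lt {K m n}.
Arguments emb_compA {K m n p} x y f yp fn yfp.
Arguments aut_emb {K g} hg m.
Arguments aut_emb_incl {K g} hg {m n} mn.

Section Semigroup.
Variable K : Struct.
Implicit Types a b c : Pt K.

(* [pre n k T] = {x in H_n | x o k in T} and [dot a k T] says T is in a.k, so
   [restr_pre] is [pre] at k = incl and [act a g m] is [dot a] at k = g, up to
   conversion; [mulpt a c] is the product ac. *)
Definition pre m n (k : 'I_m -> nat) (T : pset (H K m)) : pset (H K n) :=
  fun x => exists y, T y /\ agree y x k.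
Arguments pre {m} n k T _.

Definition dot a m (k : 'I_m -> nat) : pset (pset (H K m)) :=
  fun T => exists n, (forall i, k i < n) /\ a n (pre n k T).

Definition trace a m (T : pset (H K m)) : pset (H K m) := fun f => dot a (sval f) T.

Definition mulpt a c : Pt K := fun m T => c m (trace a T).
Arguments mulpt a c n _ : clear implicits.

Lemma pre_emb m n (f : H K m) (fn : forall i, sval f i < n) T x :
  pre n (sval f) T x <-> T (emb_comp x f fn).
Proof.
split=> [[y [Ty xy]] | Txf].
  suff -> : emb_comp x f fn = y by [].
  by apply: emb_ext => i /=; symmetry; exact: (xy i (Ordinal (fn i))).
exists (emb_comp x f fn); split => // i j /= ji.
by congr (sval x _); apply: val_inj; rewrite /= ji.
Qed.

Lemma restr_pre_emb m n (mn : m <= n) (T : pset (H K m)) x :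
  restr_pre T x <-> T (emb_comp x incl (incl_lt mn)).
Proof. exact: (pre_emb (incl_lt mn)). Qed.

Lemma pre_restr_pre m n p (np : n <= p) (f : H K m) (fn : forall i, sval f i < n) T x :
  restr_pre (pre n (sval f) T) x <-> pre p (sval f) T x.
Proof.
have fp i : sval f i < p by exact: leq_trans (fn i) np.
rewrite (restr_pre_emb np) !(pre_emb fn) (pre_emb fp).
suff -> : emb_comp (emb_comp x incl (incl_lt np)) f fn = emb_comp x f fp by [].
by apply: emb_ext => i /=; congr (sval x _); exact: val_inj.
Qed.

Lemma SG_ultra a : in_SG a -> forall n, ultrafilter (a n).
Proof. by case. Qed.

Lemma SG_restr a m n : in_SG a -> m <= n -> forall T, a m T <-> a n (restr_pre T).
Proof. by case=> _; apply. Qed.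

Lemma SG_pre_lift a n p (np : n <= p) m (f : H K m) (fn : forall i, sval f i < n) T :
  in_SG a -> a n (pre n (sval f) T) <-> a p (pre p (sval f) T).
Proof.
move=> ha; rewrite (SG_restr ha np).
exact: (ultra_iff (SG_ultra ha p) (pre_restr_pre np fn T)).
Qed.

Lemma dotE a m n (f : H K m) (fn : forall i, sval f i < n) T : in_SG a ->
  dot a (sval f) T <-> a n (pre n (sval f) T).
Proof.
move=> ha; split=> [[n' [fn' an']] | ?]; last by exists n.
by rewrite (SG_pre_lift (leq_maxl n n') fn) // -(SG_pre_lift (leq_maxr n n') fn').
Qed.

Lemma dot_ultra a m (f : H K m) : in_SG a -> ultrafilter (dot a (sval f)).
Proof.
move=> ha; have [n fn] := ubound (sval f).
apply: ultrafilter_eq (ultrafilter_preimage (fun x => emb_comp x f fn) (SG_ultra ha n)) _ => T.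
by rewrite /= (dotE fn T ha); symmetry; exact: (ultra_iff (SG_ultra ha n) (pre_emb fn T)).
Qed.

Lemma dot_pre a m n (x : H K n) (f : H K m) (fn : forall i, sval f i < n) T : in_SG a ->
  dot a (sval x) (pre n (sval f) T) <-> dot a (sval (emb_comp x f fn)) T.
Proof.
move=> ha; have [p xp] := ubound (sval x).
have xfp i : sval (emb_comp x f fn) i < p by exact: xp.
rewrite (dotE xp _ ha) (dotE xfp _ ha); apply: (ultra_iff (SG_ultra ha p)) => z.
by rewrite (pre_emb xp) (pre_emb fn) (pre_emb xfp) (emb_compA z x f xp fn xfp).
Qed.

Lemma SG_ext a b : (forall m T, a m T <-> b m T) -> a = b.
Proof.
by move=> ab; apply: functional_extensionality_dep => m; apply/funext => T; apply/propext.
Qed.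

Lemma SG_eq_of_le a b : in_SG a -> in_SG b -> (forall m T, a m T -> b m T) -> a = b.
Proof.
move=> ha hb ab; apply: SG_ext => m T; split=> [|bT]; first exact: ab.
case: (ultra_setVsetC (SG_ultra ha m) T) => // /ab.
by move/(ultraC (SG_ultra hb m)).
Qed.

Lemma mulpt_SG a c : in_SG a -> in_SG c -> in_SG (mulpt a c).
Proof.
move=> ha hc; split=> [m | m n mn T].
  exact: ultrafilter_bind (SG_ultra hc m) (fun f => dot_ultra f ha).
rewrite /mulpt (SG_restr hc mn); apply: (ultra_iff (SG_ultra hc n)) => x.
rewrite (restr_pre_emb mn); symmetry; exact: (dot_pre x (incl_lt mn) T ha).
Qed.

Lemma trace_mulpt a c m (T : pset (H K m)) : in_SG a -> in_SG c ->
  trace (mulpt a c) T = trace c (trace a T).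
Proof.
move=> ha hc; apply/funext => f; apply/propext; have [n fn] := ubound (sval f).
rewrite /trace (dotE fn _ (mulpt_SG ha hc)) (dotE fn _ hc).
by apply: (ultra_iff (SG_ultra hc n)) => x; rewrite (pre_emb fn); exact: dot_pre.
Qed.

Lemma mulptA a b c : in_SG a -> in_SG b -> in_SG c ->
  mulpt (mulpt a b) c = mulpt a (mulpt b c).
Proof. by move=> ha hb hc; apply: SG_ext => m T; rewrite /mulpt trace_mulpt. Qed.

Lemma act_SG a g (hg : is_aut K g) : in_SG a -> in_SG (act a g).
Proof.
move=> ha; split=> [m | m n mn T]; first exact: (dot_ultra (aut_emb hg m) ha).
change (dot a (sval (aut_emb hg m)) T <->
        dot a (sval (aut_emb hg n)) (pre n (sval (@incl K m)) T)).
by rewrite (dot_pre _ (incl_lt mn) _ ha) aut_emb_incl.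
Qed.

Lemma actS_emb g (hg : is_aut K g) m n (f : H K m) (fn : forall i, sval f i < n) T :
  actS T g f <-> T (emb_comp (aut_emb hg n) f fn).
Proof.
split=> [[h [Th hgf]] | Tgf]; last by exists (emb_comp (aut_emb hg n) f fn).
suff -> : emb_comp (aut_emb hg n) f fn = h by [].
by apply: emb_ext => i; rewrite hgf.
Qed.

Lemma trace_act a g (hg : is_aut K g) m (T : pset (H K m)) : in_SG a ->
  trace (act a g) T = actS (trace a T) g.
Proof.
move=> ha; apply/funext => f; apply/propext; have [n fn] := ubound (sval f).
rewrite (actS_emb hg fn) /trace (dotE fn _ (act_SG hg ha)).
exact: (dot_pre (aut_emb hg n) fn T ha).
Qed.

Lemma mulpt_act a c g (hg : is_aut K g) : in_SG a -> in_SG c ->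
  act (mulpt a c) g = mulpt a (act c g).
Proof.
move=> ha hc; apply: SG_ext => m T.
change (trace (mulpt a c) T (aut_emb hg m) <-> trace c (trace a T) (aut_emb hg m)).
by rewrite trace_mulpt.
Qed.

Lemma SG_dot_pre_iff b m n (f : H K m) (fn : forall i, sval f i < n) T : in_SG b ->
  b n (fun x => dot b (sval f) T <-> pre n (sval f) T x).
Proof.
move=> hb; have bU := SG_ultra hb n.
case: (ultra_setVsetC bU (pre n (sval f) T)) => bT; apply: (ultraS bU bT) => x Tx.
  by split => // _; exact/(dotE fn T hb).
by split=> [/(dotE fn T hb) bpre | /Tx //]; case: ((ultraC bU _).1 bT bpre).
Qed.

End Semigroup.

Arguments pre {K m} n k T _.
Arguments mulpt {K} a c n _.

Section Compactness.
Variable K : Struct.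
Implicit Types a b c : Pt K.

Lemma closed_SG_ext (C C' : pset (Pt K)) :
  closed_SG C -> (forall b, in_SG b -> C b <-> C' b) -> closed_SG C'.
Proof.
move=> clC CC' a ha nC'.
have [m [T [aT TnC]]] := clC a ha (fun Ca => nC' ((CC' a ha).1 Ca)).
by exists m, T; split => // b hb bT /(CC' b hb); exact: TnC.
Qed.

Lemma closed_SG_iff m (P : pset (H K m)) (Q : Prop) : closed_SG (fun b => b m P <-> Q).
Proof.
move=> a ha nPQ; have [aP | naP] := pselect (a m P).
  by exists m, P; split => // b _ bP [/(_ bP) q _]; apply: nPQ; split.
exists m, (fun x => ~ P x); split; first exact/(ultraC (SG_ultra ha m)).
move=> b hb /(ultraC (SG_ultra hb m)) nbP [_ /(_ _) bP]; apply: nbP; apply: bP.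
by apply: contra_notP nPQ => nQ; split.
Qed.

Lemma closed_SG_at m (P : pset (H K m)) : closed_SG (fun b => b m P).
Proof.
apply: closed_SG_ext (closed_SG_iff (P := P) (Q := True)) _ => b _.
by split => [[_ bP] | bP]; [exact: bP | split].
Qed.

Lemma closed_SG_bigcap I (D : set I) (C : I -> pset (Pt K)) :
  (forall i, D i -> closed_SG (C i)) -> closed_SG (\bigcap_(i in D) C i).
Proof.
move=> clC a ha /existsNP [i /not_implyP [Di nCi]].
have [m [T [aT TnC]]] := clC i Di a ha nCi.
by exists m, T; split => // b hb bT /(_ i Di); exact: TnC.
Qed.

Lemma closed_SGI (C1 C2 : pset (Pt K)) :
  closed_SG C1 -> closed_SG C2 -> closed_SG (C1 `&` C2).
Proof.
move=> cl1 cl2 a ha /not_andP [/(cl1 a ha) | /(cl2 a ha)] [m [T [aT TnC]]].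
  by exists m, T; split => // b hb bT [/(TnC b hb bT)].
by exists m, T; split => // b hb bT [_ /(TnC b hb bT)].
Qed.

Lemma closed_SG_dot m (f : H K m) T (Q : Prop) : closed_SG (fun b => dot b (sval f) T <-> Q).
Proof.
have [n fn] := ubound (sval f).
apply: closed_SG_ext (closed_SG_iff (P := pre n (sval f) T) (Q := Q)) _ => b hb.
by rewrite (dotE fn _ hb).
Qed.

Lemma closed_SG_trace m (T T' : pset (H K m)) : closed_SG (fun b => trace b T = T').
Proof.
have clf (f : H K m) := closed_SG_dot (f := f) (T := T) (Q := T' f).
apply: closed_SG_ext (closed_SG_bigcap (D := setT) (fun f _ => clf f)) _.
move=> b _; split=> [bT | <- f _ //]; apply/funext => f; apply/propext; exact: bT.
Qed.

Lemma SG_restrI b m1 m2 (T1 : pset (H K m1)) (T2 : pset (H K m2)) : in_SG b ->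
  b (maxn m1 m2) (restr_pre T1 `&` restr_pre T2) <-> b m1 T1 /\ b m2 T2.
Proof.
move=> hb; rewrite (SG_restr hb (leq_maxl m1 m2)) (SG_restr hb (leq_maxr m1 m2)).
split=> [bT | [bT1 bT2]]; last exact: (ultraI (SG_ultra hb (maxn m1 m2)) bT1 bT2).
by split; apply: (ultraS (SG_ultra hb _) bT) => x [].
Qed.

Lemma restr_pre_aut g (hg : is_aut K g) m n (mn : m <= n) (T : pset (H K m)) :
  restr_pre T (aut_emb hg n) <-> T (aut_emb hg m).
Proof. by rewrite (restr_pre_emb mn) aut_emb_incl. Qed.

Definition Aut := {g : nat -> nat | is_aut K g}.

Definition aut_limit (U : pset (pset Aut)) : Pt K :=
  fun n T => U (fun g => T (aut_emb (proj2_sig g) n)).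

Lemma aut_limit_SG U : ultrafilter U -> in_SG (aut_limit U).
Proof.
move=> hU; split=> [n | m n mn T]; first exact: ultrafilter_preimage.
by apply: (ultra_iff hU) => g; rewrite (restr_pre_aut _ mn).
Qed.

Theorem SG_compact (CC : set (pset (Pt K))) : ultrahomogeneous K ->
  CC !=set0 -> (forall C, CC C -> closed_SG C /\ exists2 b, in_SG b & C b) ->
  (forall C1 C2, CC C1 -> CC C2 ->
     exists2 C3, CC C3 & forall b, in_SG b -> C3 b -> C1 b /\ C2 b) ->
  exists2 a, in_SG a & forall C, CC C -> C a.
Proof.
move=> hK [C0 CC0] CCcl CCdir.
pose B A := exists m (T : pset (H K m)) C, [/\ CC C, forall b, in_SG b -> C b -> b m T &
  A = (fun g : Aut => T (aut_emb (proj2_sig g) m))].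
have [U hU BU] : exists2 U, ultrafilter U & B `<=` U.
  apply: ultrafilter_of_base.
  - exists setT, 0, setT, C0; split => // b hb _; exact: ultraT (SG_ultra hb 0).
  - move=> _ [m [T [C [CCC CT ->]]]]; have [_ [b hb Cb]] := CCcl C CCC.
    have [f Tf] := ultra_nonempty (SG_ultra hb m) (CT b hb Cb).
    have [g [hg gf]] := ultrahomogeneous_extend hK f.
    by exists (exist _ g hg); change (T (aut_emb hg m)); rewrite gf.
  - move=> _ _ [m1 [T1 [C1 [CC1 CT1 ->]]]] [m2 [T2 [C2 [CC2 CT2 ->]]]].
    have [C3 CC3 C3C12] := CCdir _ _ CC1 CC2.
    pose T3 := restr_pre T1 `&` restr_pre T2 : pset (H K (maxn m1 m2)).
    exists (fun g : Aut => T3 (aut_emb (proj2_sig g) (maxn m1 m2))).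
      exists (maxn m1 m2), T3, C3; split => // b hb C3b.
      have [C1b C2b] := C3C12 b hb C3b.
      by apply/(SG_restrI _ _ hb); split; [exact: CT1 | exact: CT2].
    move=> g [T1g T2g].
    by split; [move: T1g | move: T2g]; rewrite restr_pre_aut // ?leq_maxl ?leq_maxr.
exists (aut_limit U); first exact: aut_limit_SG.
move=> C CCC; apply: contra_notP (ultra_neq0 hU) => nCa.
have [m [T [aT TnC]]] := (CCcl C CCC).1 _ (aut_limit_SG hU) nCa.
have UnT : U (fun g : Aut => ~ T (aut_emb (proj2_sig g) m)).
  apply: BU; exists m, (fun x => ~ T x), C; split => // b hb Cb.
  by apply/(ultraC (SG_ultra hb m)) => bT; exact: TnC b hb bT Cb.
by apply: (ultraS hU (ultraI hU aT UnT)) => g [].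
Qed.

Lemma closed_SG_image_mulpt u (Y : pset (Pt K)) : ultrahomogeneous K -> in_SG u ->
  Y `<=` @in_SG K -> closed_SG Y -> closed_SG (mulpt u @` Y).
Proof.
move=> hK hu YSG clY d hd nd.
have [[m [T [dT noY]]] | allY] :=
  pselect (exists m (T : pset (H K m)), d m T /\ ~ exists2 y, Y y & mulpt u y m T).
  by exists m, T; split => // b _ bT [y Yy yb]; apply: noY; exists y; rewrite // yb.
have {}allY m (T : pset (H K m)) : d m T -> exists2 y, Y y & mulpt u y m T.
  by move=> dT; apply: contra_notP allY => noY; exists m, T.
pose CC C := exists m (T : pset (H K m)), d m T /\ C = Y `&` (fun y => mulpt u y m T).
have CC0 : CC (Y `&` fun y => mulpt u y 0 setT).
  by exists 0, setT; split; first exact: ultraT (SG_ultra hd 0).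
have [y hy yCC] : exists2 y, in_SG y & forall C, CC C -> C y.
  apply: SG_compact hK (ex_intro _ _ CC0) _ _.
  - move=> _ [m [T [dT ->]]].
    split; first exact: closed_SGI clY (closed_SG_at (P := trace u T)).
    by have [y Yy uyT] := allY m T dT; exists y; [exact: YSG | split].
  - move=> _ _ [m1 [T1 [dT1 ->]]] [m2 [T2 [dT2 ->]]].
    pose T3 := restr_pre T1 `&` restr_pre T2 : pset (H K (maxn m1 m2)).
    exists (Y `&` fun y => mulpt u y (maxn m1 m2) T3).
      by exists (maxn m1 m2), T3; split => //; apply/(SG_restrI _ _ hd).
    by move=> b hb [Yb /(SG_restrI _ _ (mulpt_SG hu hb)) [? ?]].
case: nd; exists y; first by case: (yCC _ CC0).
apply: esym; apply: SG_eq_of_le hd (mulpt_SG hu hy) _ => m T dT.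
by have [] : (Y `&` fun y => mulpt u y m T) y by apply: yCC; exists m, T.
Qed.

Lemma closed_SG_mulpt_fix u : in_SG u -> closed_SG [set z : Pt K | mulpt u z = u].
Proof.
move=> hu; have clC (i : {n : nat & pset (H K n)}) :=
  closed_SG_iff (P := trace u (projT2 i)) (Q := u _ (projT2 i)).
apply: closed_SG_ext (closed_SG_bigcap (D := setT) (fun i _ => clC i)) _.
move=> b _ /=; split=> [bu | ub [n T] _ /=]; last by rewrite -{2}ub.
by apply: SG_ext => n T; exact: (bu (existT _ n T)).
Qed.

Lemma SG_ellis_numakura (T0 : pset (Pt K)) : ultrahomogeneous K ->
  T0 `<=` @in_SG K -> closed_SG T0 -> T0 !=set0 -> mul_closed mulpt T0 ->
  exists2 u, T0 u & mulpt u u = u.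
Proof.
move=> hK; apply: (@ellis_numakura _ (@in_SG K) (@closed_SG K) mulpt).
- by move=> F clF; exact: closed_SG_bigcap.
- move=> F [Z0 FZ0] Ftot FZ.
  suff [a _ aF] : exists2 a, in_SG a & forall Z, F Z -> Z a by exists a.
  apply: SG_compact hK (ex_intro _ _ FZ0) _ _ => [Z /FZ [clZ [z Zz] ZSG] | Z1 Z2 F1 F2].
    by split => //; exists z => //; exact: ZSG.
  case: (Ftot _ _ F1 F2) => sub; [exists Z1 | exists Z2] => // b _ Zb.
    by split => //; exact: sub.
  by split => //; exact: sub.
- exact: mulptA.
- by move=> u Y hu; exact: closed_SG_image_mulpt.
- exact: closed_SG_mulpt_fix.
Qed.

End Compactness.

Section MinimalSubflow.
Variable K : Struct.
Hypothesis hK : ultrahomogeneous K.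
Variable M : pset (Pt K).
Hypothesis hM : minimal_subflow M.

Lemma minimal_SG b : M b -> in_SG b.
Proof. by case: hM => + _; apply. Qed.

Lemma minimal_closed : closed_SG M.
Proof. by case: hM => _ [_ []]. Qed.

Lemma minimal_act b g : M b -> is_aut K g -> M (act b g).
Proof. by case: hM => _ [_ [_ [+ _]]]; apply. Qed.

Lemma minimal_mulpt b c : M b -> in_SG c -> M (mulpt b c).
Proof.
move=> Mb hc; have hb := minimal_SG Mb; apply: contrapT => nM.
have [m [T [bcT TnM]]] := minimal_closed (mulpt_SG hb hc) nM.
have [f bfT] := ultra_nonempty (SG_ultra hc m) bcT.
have [g [hg gf]] := ultrahomogeneous_extend hK f.
apply: TnM (act_SG hg hb) _ _; first by change (trace b T (aut_emb hg m)); rewrite gf.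
exact: minimal_act.
Qed.

Lemma mulpt_retraction u : M u -> mulpt u u = u -> retraction M (mulpt u).
Proof.
move=> Mu uu; have hu := minimal_SG Mu.
split; first by move=> b hb; exact: minimal_mulpt.
split; first by move=> b hb n T ubT; exists n, (trace u T).
split; first by move=> b g hb hg; exact: esym (mulpt_act hg hu hb).
move=> b Mb; have [v hv <-] : (mulpt u @` @in_SG K) b.
  case: hM => _ [_ [_ [_ Mmin]]]; apply: Mmin Mb.
  - by move=> _ [v hv <-]; exact: minimal_mulpt.
  - by exists (mulpt u u), u.
  - by apply: closed_SG_image_mulpt => // a ha.
  - move=> _ g [v hv <-] hg; exists (act v g); first exact: act_SG.
    exact: esym (mulpt_act hg hu hv).
by rewrite -mulptA // uu.
Qed.

Section MinimalSet.
Variables (m : nat) (S : pset (H K m)).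
Hypothesis hS : minimal_set S.

Lemma trace_orbit_closure b : in_SG b -> orbit_closure S (trace b S).
Proof.
move=> hb F; have [n Fn] := ubound_list F.
have [x Fx] := ultra_nonempty (SG_ultra hb n)
  (ultra_list_forall (SG_ultra hb n) (fun f Ff => SG_dot_pre_iff (Fn f Ff) S hb)).
have [g [hg gx]] := ultrahomogeneous_extend hK x.
exists (actS S g); split; first by exists g.
by move=> f Ff; rewrite /trace (Fx f Ff) (pre_emb (Fn f Ff)) (actS_emb hg (Fn f Ff)) gx.
Qed.

Lemma closed2_trace_image : closed2 [set trace b S | b in M].
Proof.
move=> T TS; pose C F := M `&` [set b | forall f, List.In f F -> (trace b S f <-> T f)].
have [a ha aC] : exists2 a, in_SG a & forall C', range C C' -> C' a.
  apply: SG_compact hK (ex_intro _ _ (imageT C nil)) _ _ => [_ [F _ <-] | _ _ [F1 _ <-] [F2 _ <-]].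
    have clF f := closed_SG_dot (f := f) (T := S) (Q := T f).
    split; first exact: closed_SGI minimal_closed (closed_SG_bigcap (fun f _ => clF f)).
    have [_ [[b Mb <-] bT]] := TS F.
    by exists b; [exact: minimal_SG | split => // f Ff; exact: iff_sym (bT f Ff)].
  exists (C (F1 ++ F2)); first exact: imageT.
  move=> b _ [Mb bF]; split; split => // f Ff; apply: bF; apply: List.in_or_app.
    by left.
  by right.
have [Ma _] := aC _ (imageT C nil).
exists a => //; apply/funext => f; apply/propext.
by have [_ /(_ f (or_introl erefl))] := aC _ (imageT C [:: f]).
Qed.

Lemma invariant2_trace_image : invariant2 [set trace b S | b in M].
Proof.
move=> _ g [b Mb <-] hg; exists (act b g); first exact: minimal_act.
exact: trace_act (minimal_SG Mb).
Qed.

Lemma exists_trace_eq : exists2 p, M p & trace p S = S.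
Proof.
case: hS => _ [_ [_ Smin]]; have [b Mb] : exists b, M b by case: hM => _ [].
apply: (Smin [set trace b S | b in M]) _ _ _ _ S (orbit_closure_self S).
- by move=> _ [c Mc <-]; exact/trace_orbit_closure/minimal_SG.
- by exists (trace b S), b.
- exact: closed2_trace_image.
- exact: invariant2_trace_image.
Qed.

Lemma exists_idempotent_trace_fixed : exists u, [/\ M u, trace u S = S & mulpt u u = u].
Proof.
have [p Mp pS] := exists_trace_eq.
suff [u [Mu uS] uu] : exists2 u, (M `&` fun q => trace q S = S) u & mulpt u u = u by exists u.
apply: SG_ellis_numakura hK _ _ _ _.
- by move=> q [/minimal_SG].
- exact: closed_SGI minimal_closed (closed_SG_trace (T := S) (T' := S)).
- by exists p.
move=> q q' [Mq qS] [Mq' q'S]; split; first exact: minimal_mulpt (minimal_SG Mq').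
by rewrite trace_mulpt ?qS //; exact: minimal_SG.
Qed.

End MinimalSet.

End MinimalSubflow.

Theorem mainTheorem16 (K : Struct) (hK : ultrahomogeneous K)
  (M : pset (Pt K)) (hM : minimal_subflow M)
  (a c : Pt K) (ha : in_SG a) (hc : in_SG c)
  (hphi : forall phi : Pt K -> Pt K, retraction M phi -> phi a = phi c)
  (m : nat) (S : pset (H K m)) (hS : minimal_set S) :
  a m S <-> c m S.
Proof.
have [u [Mu uS uu]] := exists_idempotent_trace_fixed hK hM hS.
have fixS b : mulpt u b m S = b m S by rewrite /mulpt uS.
by rewrite -fixS (hphi _ (mulpt_retraction hK hM Mu uu)) fixS.
Qed.
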